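(* There is a one-to-one correspondence between length monotonous automatic presentations of $\omega$-words over $\Sigma$ and total automatic transductions $f:\{a\}^*\to\Sigma^*$ from words over the unary alphabet $\{a\}$ to finite words. Moreover, when an automatic $\omega$-word $w$ corresponds to a transduction $f$, then $w=\Pi f$.
   Context: Convolution of words: for words $x_1,\dots,x_r$ over an alphabet $B$, $x_1\otimes\cdots\otimes x_r$ is the word over $(B\cup\{\text{␣}\})^r$ whose $i$-th letter is the tuple of $i$-th letters. Shorter words are padded on the right with a fresh padding symbol ␣ up to the maximal length. An automatic presentation of an $\omega$-word over $\Sigma$ is a tuple $S=(B,A_{univ},(A_\sigma)_{\sigma\in\Sigma},A_\le)$ where: - $B$ is a finite alphabet; - $A_{univ}$ and the $A_\sigma$ are finite automata over $B$; - $A_\le$ is a finite automaton over $(B\cup\{\text{␣}\})^2$. The presented structure has universe $L(A_{univ})$, the predicate $\sigma$ holding at $x$ iff $x\in L(A_\sigma)$, and $x\le y$ iff $x\otimes y\in L(A_\le)$. It is required to be isomorphic to an $\omega$-word, i.e. to $(\mathbb N,\le)$ with each element carrying exactly one label $\sigma\in\Sigma$. The presentation is length monotonous if $|x|<|y|$ implies $x\le y$ for all elements $x,y$. An automatic transduction from $\{a\}^*$ to $\Sigma^*$ is a tuple $(B,A_{dom},A_{univ},(A_\sigma)_{\sigma\in\Sigma},A_\le)$ where: - $B$ is a finite work alphabet; - $A_{dom}$ is a finite automaton over $\{a\}$; - $A_{univ}$ and the $A_\sigma$ are finite automata over $\{a\}\times B$; - $A_\le$ is a finite automaton over $\{a\}\times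 B\times B$. On $a^n\in L(A_{dom})$ the output is the structure with: - universe $V=\{x\in B^n: a^n\otimes x\in L(A_{univ})\}$; - labels $\sigma$ at $x$ iff $a^n\otimes x\in L(A_\sigma)$; - order $x\le y$ iff $a^n\otimes x\otimes y\in L(A_\le)$. It is required to be a finite word structure, which is identified with a word of $\Sigma^*$. It is total if $L(A_{dom})=\{a\}^*$. For a total $f:\{a\}^*\to\Sigma^*$, $\Pi f$ denotes the concatenation $f(\varepsilon)f(a)f(aa)\cdots$. *)

From mathcomp Require Import all_boot.
Set Implicit Arguments. Unset Strict Implicit. Unset Printing Implicit Defensive.

Record nfa (A : Type) := Nfa {
  nst : finType;
  ninit : pred nst;
  nfin : pred nst;
  ntr : nst -> A -> pred nst }.

Fixpoint nacc_from (A : Type) (M : nfa A) (q : nst M) (w : seq A) : bool :=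
  match w with
  | [::] => @nfin A M q
  | a :: w' => [exists q', @ntr A M q a q' && @nacc_from A M q' w']
  end.

Definition accepts (A : Type) (M : nfa A) (w : seq A) : bool :=
  [exists q, @ninit A M q && @nacc_from A M q w].

(* x (x) y over (B u {pad})^2 : padding symbol is None *)
Definition conv2 (B : Type) (x y : seq B) : seq (option B * option B) :=
  mkseq (fun i => (onth x i, onth y i)) (maxn (size x) (size y)).

(* a^n (x) x over {a} x B, where {a} = unit and n = size x *)
Definition conv_a (B : Type) (x : seq B) : seq (unit * B) := map (pair tt) x.

(* a^n (x) x (x) y over {a} x B x B, for x y of length n *)
Definition conv_a2 (B : Type) (x y : seq B) : seq (unit * B * B) :=
  map (fun p => (tt, p.1, p.2)) (zip x y).

Record presentation (Sigma B : finType) := Pres {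
  p_univ : nfa B;
  p_lab : Sigma -> nfa B;
  p_le : nfa (option B * option B) }.

(* S is an automatic presentation of the omega-word w : nat -> Sigma:
   h is an isomorphism from (N, <=, labels of w) onto the presented structure *)
Definition presents (Sigma B : finType) (S : presentation Sigma B)
    (w : nat -> Sigma) : Prop :=
  exists h : nat -> seq B,
    (forall i, accepts (p_univ S) (h i)) /\
    (forall x, accepts (p_univ S) x -> exists i, h i = x) /\
    (forall i j, accepts (p_le S) (conv2 (h i) (h j)) <-> i <= j) /\
    (forall i (s : Sigma), accepts (p_lab S s) (h i) <-> s = w i).

Definition length_monotonous (Sigma B : finType) (S : presentation Sigma B) :=
  forall x y : seq B, accepts (p_univ S) x -> accepts (p_univ S) y ->
    size x < size y -> accepts (p_le S) (conv2 x y).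

Record transduction (Sigma B : finType) := Trans {
  t_dom : nfa unit;
  t_univ : nfa (unit * B);
  t_lab : Sigma -> nfa (unit * B);
  t_le : nfa (unit * B * B) }.

(* On input a^n the transduction T outputs the finite word u : the output
   structure is isomorphic (via h) to the word structure of u. *)
Definition outputs (Sigma B : finType) (T : transduction Sigma B) (n : nat)
    (u : seq Sigma) : Prop :=
  exists h : nat -> seq B,
    (forall i, i < size u -> size (h i) = n /\ accepts (t_univ T) (conv_a (h i))) /\
    (forall x : seq B, size x = n -> accepts (t_univ T) (conv_a x) ->
        exists2 i, i < size u & h i = x) /\
    (forall i j, i < size u -> j < size u ->
        (accepts (t_le T) (conv_a2 (h i) (h j)) <-> i <= j)) /\
    (forall i (s : Sigma), i < size u ->
        (accepts (t_lab T s) (conv_a (h i)) <-> onth u i = Some s)).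

Definition total_transduction (Sigma B : finType) (T : transduction Sigma B) :=
  forall n, accepts (t_dom T) (nseq n tt) /\ exists u, outputs T n u.

(* Pi u = w : the concatenation u 0 ++ u 1 ++ ... is the omega-word w *)
Definition prefix_cat (Sigma : Type) (u : nat -> seq Sigma) (k : nat) :=
  flatten (map u (iota 0 k)).

Definition Pi_eq (Sigma : Type) (u : nat -> seq Sigma) (w : nat -> Sigma) :=
  (forall N, exists k, N < size (prefix_cat u k)) /\
  (forall k i, i < size (prefix_cat u k) -> onth (prefix_cat u k) i = Some (w i)).

Definition corresponds (Sigma B : finType) (S : presentation Sigma B)
    (T : transduction Sigma B) : Prop :=
  (forall x : seq B, accepts (p_univ S) x <-> accepts (t_univ T) (conv_a x)) /\
  (forall (s : Sigma) (x : seq B), accepts (p_univ S) x ->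
      (accepts (p_lab S s) x <-> accepts (t_lab T s) (conv_a x))) /\
  (forall x y : seq B, accepts (p_univ S) x -> accepts (p_univ S) y ->
      size x = size y ->
      (accepts (p_le S) (conv2 x y) <-> accepts (t_le T) (conv_a2 x y))).

Definition same_pres (Sigma B : finType) (S S' : presentation Sigma B) :=
  (forall x, accepts (p_univ S) x <-> accepts (p_univ S') x) /\
  (forall s x, accepts (p_univ S) x ->
      (accepts (p_lab S s) x <-> accepts (p_lab S' s) x)) /\
  (forall x y, accepts (p_univ S) x -> accepts (p_univ S) y ->
      (accepts (p_le S) (conv2 x y) <-> accepts (p_le S') (conv2 x y))).

Definition same_trans (Sigma B : finType) (T T' : transduction Sigma B) :=
  (forall x, accepts (t_univ T) (conv_a x) <-> accepts (t_univ T') (conv_a x)) /\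
  (forall s x, accepts (t_univ T) (conv_a x) ->
      (accepts (t_lab T s) (conv_a x) <-> accepts (t_lab T' s) (conv_a x))) /\
  (forall x y, accepts (t_univ T) (conv_a x) -> accepts (t_univ T) (conv_a y) ->
      size x = size y ->
      (accepts (t_le T) (conv_a2 x y) <-> accepts (t_le T') (conv_a2 x y))).

(* In a length monotonous presentation of an omega-word, the elements of length
   n form a finite block of consecutive positions, and the blocks follow each
   other in order of n.  Reading the n-th block (elements of length n together
   with their labels and the order between them) is an automatic transduction on
   input a^n, so the omega-word is the concatenation of its outputs.  Conversely,
   the blocks output by a total transduction are glued into one presentation by
   comparing words first by length and then, for equal lengths, with the order
   of the transduction; this comparison is automatic because the shorter word
   is the one that is padded first. *)

From mathcomp Require Import all_boot zify.
From Stdlib Require Import IndefiniteDescription.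
Set Implicit Arguments. Unset Strict Implicit. Unset Printing Implicit Defensive.

Lemma conv2_cons (B : Type) (a b : option B) x y (x' y' : seq B) :
  (forall i, onth x' i.+1 = onth x i) -> (forall i, onth y' i.+1 = onth y i) ->
  onth x' 0 = a -> onth y' 0 = b ->
  maxn (size x') (size y') = (maxn (size x) (size y)).+1 ->
  conv2 x' y' = (a, b) :: conv2 x y.
Proof.
move=> Hx Hy <- <- Hs; rewrite /conv2 /mkseq Hs.
rewrite [iota _ _]/= map_cons -[1]/(1 + 0) iotaDl -map_comp.
by congr (_ :: _); apply: eq_map => i /=; rewrite add0n -Hx -Hy.
Qed.

Lemma conv2_cons_cons (B : Type) (a b : B) x y :
  conv2 (a :: x) (b :: y) = (Some a, Some b) :: conv2 x y.
Proof. by apply: conv2_cons => //=; rewrite maxnSS. Qed.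

Lemma conv2_nil_cons (B : Type) (b : B) y :
  conv2 [::] (b :: y) = (None, Some b) :: conv2 [::] y.
Proof. by apply: conv2_cons => //= [[]|] //; rewrite !max0n. Qed.

Lemma conv2_cons_nil (B : Type) (a : B) x :
  conv2 (a :: x) [::] = (Some a, None) :: conv2 x [::].
Proof. by apply: conv2_cons => //= -[]. Qed.

Lemma onth_nth (T : Type) (x0 : T) s j : j < size s -> onth s j = Some (nth x0 s j).
Proof. by move=> Hj; rewrite onthE (nth_map x0). Qed.

Lemma eq_map_iota_onth (T : Type) (v : seq T) f :
  (forall j, j < size v -> onth v j = Some (f j)) -> v = map f (iota 0 (size v)).
Proof.
elim: v f => [|x v IH] f //= H.
case: (H 0 erefl) => ->; congr (_ :: _).
rewrite -[1]/(1 + 0) iotaDl -map_comp; apply: IH => j Hj.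
by rewrite /= add1n -(H j.+1).
Qed.

Lemma sorted_ltn_leq_nth s j k : sorted ltn s -> j < size s -> k < size s ->
  (nth 0 s j <= nth 0 s k) = (j <= k).
Proof.
move=> Hs Hj Hk; case: (ltngtP j k) => [Hjk|Hkj|->]; last exact: leqnn.
- by rewrite ltnW // (sorted_ltn_nth ltn_trans 0 Hs).
- by rewrite leqNgt (sorted_ltn_nth ltn_trans 0 Hs).
Qed.

Lemma sorted_ltn_cat (s1 s2 : seq nat) : sorted ltn s1 -> sorted ltn s2 ->
  (forall i j, i \in s1 -> j \in s2 -> i < j) -> sorted ltn (s1 ++ s2).
Proof.
case: s1 => [|x s1] //= H1 H2 H; rewrite cat_path H1 /=.
case: s2 H2 H => [|y s2] //= H2 H; rewrite H2 andbT; apply: H.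
  by rewrite mem_last.
by rewrite mem_head.
Qed.

Lemma downward_closed_iota (s : seq nat) : sorted ltn s ->
  (forall i j, i \in s -> j <= i -> j \in s) -> s = iota 0 (size s).
Proof.
move=> Hs Hd; have Hu := sorted_uniq ltn_trans ltnn Hs.
have Hlt x : x \in s -> x < size s.
  move=> Hx; have : {subset iota 0 x.+1 <= s}.
    by move=> j; rewrite mem_iota add0n ltnS => /andP[_ Hj]; exact: Hd Hx Hj.
  by move/(uniq_leq_size (iota_uniq 0 x.+1)); rewrite size_iota.
apply: (irr_sorted_eq ltn_trans ltnn Hs (iota_ltn_sorted 0 _)).
have Hsub : {subset s <= iota 0 (size s)}.
  by move=> x Hx; rewrite mem_iota add0n Hlt.
by have [_ E] := uniq_min_size Hu Hsub (eq_leq (size_iota _ _)).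
Qed.

Section AutomataConstructions.
Variable B : finType.

Definition unary_proj (M : nfa (unit * B)) : nfa B :=
  Nfa (@ninit _ M) (@nfin _ M) (fun q b => @ntr _ M q (tt, b)).

Lemma accepts_unary_proj M x : accepts (unary_proj M) x = accepts M (conv_a x).
Proof.
apply: eq_existsb => q; congr (_ && _).
by elim: x q => [|b x IH] q //=; apply: eq_existsb => q'; rewrite IH.
Qed.

Definition unary_ext (M : nfa B) : nfa (unit * B) :=
  Nfa (@ninit _ M) (@nfin _ M) (fun q p => @ntr _ M q p.2).

Lemma accepts_unary_ext M x : accepts (unary_ext M) (conv_a x) = accepts M x.
Proof.
apply: eq_existsb => q; congr (_ && _).
by elim: x q => [|b x IH] q //=; apply: eq_existsb => q'; rewrite IH.
Qed.

Definition unary_all : nfa unit := @Nfa unit unit predT predT (fun _ _ => predT).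

Lemma accepts_unary_all n : accepts unary_all (nseq n tt).
Proof.
by apply/existsP; exists tt; elim: n => [|n IH] //=; apply/existsP; exists tt.
Qed.

Definition synchronous_rel (M : nfa (option B * option B)) : nfa (unit * B * B) :=
  Nfa (@ninit _ M) (@nfin _ M) (fun q p => @ntr _ M q (Some p.1.2, Some p.2)).

Lemma accepts_synchronous_rel M x y : size x = size y ->
  accepts (synchronous_rel M) (conv_a2 x y) = accepts M (conv2 x y).
Proof.
move=> Hs; apply: eq_existsb => q; congr (_ && _).
elim: x y Hs q => [|a x IH] [|b y] // [] Hs q.
by rewrite conv2_cons_cons /=; apply: eq_existsb => q'; rewrite IH.
Qed.

(* The state [inr false] reads
   pairs of letters without constraint, and [inr true] is reached once the
   first component is padded, so [inr false] accepts exactly when x is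
   strictly shorter than y. *)
Definition length_lex_tr (M : nfa (unit * B * B)) (s : nst M + bool)
    (p : option B * option B) (s' : nst M + bool) : bool :=
  match p, s, s' with
  | (Some a, Some b), inl q, inl q' => @ntr _ M q (tt, a, b) q'
  | (Some _, Some _), inr false, inr false => true
  | (None, Some _), inr _, inr true => true
  | _, _, _ => false
  end.

Definition length_lex (M : nfa (unit * B * B)) : nfa (option B * option B) :=
  Nfa (fun s => if s is inl q then @ninit _ M q else ~~ (s == inr true))
      (fun s => if s is inl q then @nfin _ M q else s == inr true)
      (@length_lex_tr M).

Lemma length_lex_padded M y : @nacc_from _ (length_lex M) (inr true) (conv2 [::] y).
Proof.
elim: y => [|b y IH] //; rewrite conv2_nil_cons /=.
by apply/existsP; exists (inr true); rewrite IH.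
Qed.

Lemma length_lex_shorter M x y :
  @nacc_from _ (length_lex M) (inr false) (conv2 x y) = (size x < size y).
Proof.
elim: x y => [|a x IH] [|b y] //.
- by rewrite conv2_nil_cons /=; apply/existsP; exists (inr true); rewrite length_lex_padded.
- by rewrite conv2_cons_nil /=; apply/existsP => -[[q|[]]].
- rewrite conv2_cons_cons /= ltnS -IH.
  by apply/existsP/idP => [[[q|[]]] //|H]; exists (inr false).
Qed.

Lemma length_lex_same_length M x y q :
  @nacc_from _ (length_lex M) (inl q) (conv2 x y) =
  (size x == size y) && @nacc_from _ M q (conv_a2 x y).
Proof.
elim: x y q => [|a x IH] [|b y] q //.
- by rewrite conv2_nil_cons /=; apply/existsP => -[[q'|[]]].
- by rewrite conv2_cons_nil /=; apply/existsP => -[[q'|[]]].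
rewrite conv2_cons_cons /= eqSS; apply/existsP/idP => [[[q'|[]]] //|].
  rewrite IH => /andP[H1 /andP[-> H2]] /=; apply/existsP; exists q'; by rewrite H1 H2.
case/andP=> Hs /existsP[q' /andP[H1 H2]]; exists (inl q'); by rewrite H1 IH Hs.
Qed.

Lemma accepts_length_lex M x y : accepts (length_lex M) (conv2 x y) =
  (size x < size y) || ((size x == size y) && accepts M (conv_a2 x y)).
Proof.
apply/existsP/idP => [[[q|[]]] /=|].
- rewrite length_lex_same_length => /andP[H1 /andP[-> H2]].
  by apply/orP; right; apply/existsP; exists q; rewrite H1 H2.
- by [].
- by rewrite length_lex_shorter => ->.
case/orP => [H|/andP[Hs /existsP[q /andP[H1 H2]]]].
- by exists (inr false); rewrite /= length_lex_shorter.
by exists (inl q); rewrite /= length_lex_same_length Hs H1 H2.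
Qed.

End AutomataConstructions.

Section PresentationLevels.
Variables (Sigma B : finType) (S : presentation Sigma B) (w : nat -> Sigma).
Variable h : nat -> seq B.
Hypothesis h_univ : forall i, accepts (p_univ S) (h i).
Hypothesis h_onto : forall x, accepts (p_univ S) x -> exists i, h i = x.
Hypothesis h_le : forall i j, accepts (p_le S) (conv2 (h i) (h j)) <-> i <= j.
Hypothesis h_lab : forall i (s : Sigma), accepts (p_lab S s) (h i) <-> s = w i.

Lemma pres_inj : injective h.
Proof.
move=> i j E; apply/eqP; rewrite eqn_leq.
by apply/andP; split; apply/h_le; rewrite E; apply/h_le.
Qed.

Lemma pres_index_ex x : exists i, (h i == x) || ~~ accepts (p_univ S) x.
Proof.
case Hx: (accepts (p_univ S) x); last by exists 0; rewrite orbT.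
by case: (h_onto Hx) => i Hi; exists i; rewrite Hi eqxx.
Qed.

Definition pres_index x := ex_minn (pres_index_ex x).

Lemma pres_indexK x : accepts (p_univ S) x -> h (pres_index x) = x.
Proof. by rewrite /pres_index; case: ex_minnP => i /orP[/eqP -> //|/negP]. Qed.

Lemma pres_index_h i : pres_index (h i) = i.
Proof. exact: pres_inj (pres_indexK (h_univ i)). Qed.

Definition level_bound n := (\max_(t : n.-tuple B) pres_index t).+1.

Lemma level_boundP i : i < level_bound (size (h i)).
Proof.
rewrite /level_bound ltnS -{1}(pres_index_h i).
exact: (leq_bigmax (F := fun t : (size (h i)).-tuple B => pres_index t) (in_tuple (h i))).
Qed.

Definition level n := [seq i <- iota 0 (level_bound n) | size (h i) == n].

Lemma mem_level n i : (i \in level n) = (size (h i) == n).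
Proof.
by rewrite mem_filter mem_iota /= add0n; case: eqP => // <-; rewrite level_boundP.
Qed.

Lemma sorted_level n : sorted ltn (level n).
Proof. exact: (sorted_filter ltn_trans _ (iota_ltn_sorted 0 _)). Qed.

Lemma size_nth_level n j : j < size (level n) -> size (h (nth 0 (level n) j)) = n.
Proof. by move=> Hj; apply/eqP; rewrite -mem_level mem_nth. Qed.

Definition trans_of_pres : transduction Sigma B :=
  Trans unary_all (unary_ext (p_univ S)) (fun s => unary_ext (p_lab S s))
        (synchronous_rel (p_le S)).

Lemma trans_of_pres_corresponds : corresponds S trans_of_pres.
Proof.
split; first by move=> x; rewrite accepts_unary_ext.
split; first by move=> s x _ /=; rewrite accepts_unary_ext.
by move=> x y _ _ Hs /=; rewrite accepts_synchronous_rel.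
Qed.

Lemma trans_of_pres_outputs n : outputs trans_of_pres n (map w (level n)).
Proof.
exists (fun j => h (nth 0 (level n) j)); rewrite size_map.
split; first by move=> j Hj /=; rewrite accepts_unary_ext size_nth_level.
split.
  move=> x Hx /=; rewrite accepts_unary_ext => /h_onto [i Hi].
  have Hin : i \in level n by rewrite mem_level Hi Hx.
  by exists (index i (level n)); rewrite ?index_mem ?nth_index.
split.
  move=> j k Hj Hk /=.
  rewrite accepts_synchronous_rel ?size_nth_level // h_le.
  by rewrite sorted_ltn_leq_nth // sorted_level.
move=> j s Hj /=; rewrite accepts_unary_ext h_lab onth_map (onth_nth 0) //=.
by split => [->|[]].
Qed.

Lemma trans_of_pres_total : total_transduction trans_of_pres.
Proof.
by move=> n; split; [exact: accepts_unary_all | exists (map w (level n)); exact: trans_of_pres_outputs].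
Qed.

(* [pres_index] maps the output positions monotonically onto the level. *)
Lemma outputs_level T n v : corresponds S T -> outputs T n v -> v = map w (level n).
Proof.
case=> [cU [cL cO]] [h' [H1 [H2 [H3 H4]]]].
set m := size v.
pose sg j := pres_index (h' j).
have Su j : j < m -> accepts (p_univ S) (h' j) by move/H1 => [_]; rewrite cU.
have Hsg j : j < m -> h (sg j) = h' j by move=> Hj; exact: pres_indexK (Su j Hj).
have Hsz j : j < m -> size (h' j) = n by move/H1 => [].
have sg_mono j k : j < m -> k < m -> j < k -> sg j < sg k.
  move=> Hj Hk Hjk; rewrite ltnNge; apply/negP => /h_le.
  rewrite Hsg // Hsg // cO ?Su ?Hsz // H3 //.
  by rewrite leqNgt Hjk.
have sg_level : map sg (iota 0 m) = level n.
  apply: (irr_sorted_eq ltn_trans ltnn).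
  - rewrite sorted_map; apply: (sub_in_sorted (P := fun j => j < m)) (iota_ltn_sorted 0 m).
      by move=> j k Hj Hk /=; exact: sg_mono.
    by apply/allP => j; rewrite mem_iota add0n.
  - exact: sorted_level.
  - move=> i; rewrite mem_level; apply/mapP/idP.
    + case=> j; rewrite mem_iota add0n => /andP[_ Hj] ->; by rewrite Hsg // Hsz.
    + move=> /eqP Hi; have := H2 (h i) Hi; rewrite -cU => /(_ (h_univ i)) [j Hj Hh].
      by exists j; rewrite ?mem_iota // /sg Hh pres_index_h.
rewrite -sg_level -map_comp; apply: eq_map_iota_onth => j Hj.
by apply: (H4 j (w (sg j)) Hj).1; rewrite -cL ?Su // -Hsg //; exact/h_lab.
Qed.

Hypothesis S_mono : length_monotonous S.

Lemma le_size x y : accepts (p_univ S) x -> accepts (p_univ S) y ->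
  accepts (p_le S) (conv2 x y) -> size x <= size y.
Proof.
move=> /h_onto [i <-] /h_onto [j <-] /h_le Hij; rewrite leqNgt; apply/negP => Hlt.
have Hji := (h_le j i).1 (S_mono (h_univ j) (h_univ i) Hlt).
have E : i = j by apply/eqP; rewrite eqn_leq Hij Hji.
by rewrite E ltnn in Hlt.
Qed.

Lemma size_pres_mono i j : i <= j -> size (h i) <= size (h j).
Proof. by move=> /h_le; apply: le_size. Qed.

Definition levels_below k := flatten (map level (iota 0 k)).

Lemma levels_belowS k : levels_below k.+1 = levels_below k ++ level k.
Proof. by rewrite /levels_below -addn1 iotaD map_cat flatten_cat /= cats0. Qed.

Lemma mem_levels_below k i : (i \in levels_below k) = (size (h i) < k).
Proof.
elim: k => [|k IH]; first by rewrite ltn0.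
by rewrite levels_belowS mem_cat IH mem_level [RHS]ltnS [RHS]leq_eqVlt orbC.
Qed.

Lemma levels_below_iota k : levels_below k = iota 0 (size (levels_below k)).
Proof.
apply: downward_closed_iota => [|i j]; last first.
  by rewrite !mem_levels_below => Hi /size_pres_mono Hj; exact: leq_ltn_trans Hj Hi.
elim: k => // k IH; rewrite levels_belowS; apply: sorted_ltn_cat => //.
  exact: sorted_level.
move=> i j; rewrite mem_levels_below mem_level => Hi /eqP Hj.
by rewrite ltnNge; apply/negP => /size_pres_mono; rewrite Hj leqNgt Hi.
Qed.

Lemma Pi_eq_levels T u : corresponds S T ->
  (forall n, outputs T n (u n)) -> Pi_eq u w.
Proof.
move=> cT Hu.
have Ep k : prefix_cat u k = map w (levels_below k).
  rewrite /prefix_cat /levels_below map_flatten -map_comp; congr flatten.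
  by apply: eq_map => n; exact: outputs_level cT (Hu n).
split=> [N|k i]; last rewrite Ep size_map.
  exists (size (h N)).+1; rewrite Ep size_map.
  have : N \in levels_below (size (h N)).+1 by rewrite mem_levels_below.
  by rewrite {1}levels_below_iota mem_iota => /andP[].
have E := levels_below_iota k; rewrite E size_iota => Hi.
by rewrite onth_map (onth_nth 0) ?size_iota ?nth_iota.
Qed.

End PresentationLevels.

Section TransductionBlocks.
Variables (Sigma B : finType) (T : transduction Sigma B) (u : nat -> seq Sigma).
Variable H : nat -> nat -> seq B.
Hypothesis H_out : forall n,
  (forall i, i < size (u n) -> size (H n i) = n /\ accepts (t_univ T) (conv_a (H n i))) /\
  (forall x : seq B, size x = n -> accepts (t_univ T) (conv_a x) ->
      exists2 i, i < size (u n) & H n i = x) /\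
  (forall i j, i < size (u n) -> j < size (u n) ->
      (accepts (t_le T) (conv_a2 (H n i) (H n j)) <-> i <= j)) /\
  (forall i (s : Sigma), i < size (u n) ->
      (accepts (t_lab T s) (conv_a (H n i)) <-> onth (u n) i = Some s)).
Hypothesis u_inf : forall N, exists n, N <= n /\ u n != [::].
Variable x0 : Sigma.

Fixpoint block_start n := if n is n'.+1 then block_start n' + size (u n') else 0.

Lemma block_start_mono m n : m <= n -> block_start m <= block_start n.
Proof.
elim: n => [|n IH]; first by rewrite leqn0 => /eqP ->.
rewrite leq_eqVlt => /orP[/eqP -> //|]; rewrite ltnS => /IH Hm.
exact: leq_trans Hm (leq_addr _ _).
Qed.

Lemma block_start_unbounded i : exists n, i < block_start n.
Proof.
elim: i => [|i [n Hn]].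
  case: (u_inf 0) => n [_ Hn]; exists n.+1 => /=; case: (u n) Hn => // a l _.
  by rewrite addnS.
case: (u_inf n) => m [Hnm Hm]; exists m.+1 => /=.
have := block_start_mono Hnm; case: (u m) Hm => // a l _ /= Hle.
rewrite addnS ltnS; exact: leq_trans Hn (leq_trans Hle (leq_addr _ _)).
Qed.

Definition in_block n i := (block_start n <= i) && (i < block_start n.+1).

Lemma in_block_ex i : exists n, in_block n i.
Proof.
case: (block_start_unbounded i) => n; elim: n => [|n IH] //= Hi.
by case: (ltnP i (block_start n)) => [/IH //|Hn]; exists n; rewrite /in_block Hn.
Qed.

Lemma in_block_uniq n m i : in_block n i -> in_block m i -> n = m.
Proof.
rewrite /in_block => /andP[H1 H2] /andP[H3 H4].
by case: (ltngtP n m) => // Hnm; have := block_start_mono Hnm; lia.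
Qed.

Definition block_of i := ex_minn (in_block_ex i).

Lemma block_ofP i : in_block (block_of i) i.
Proof. by rewrite /block_of; case: ex_minnP. Qed.

Lemma block_of_eq n i : in_block n i -> block_of i = n.
Proof. exact: in_block_uniq (block_ofP i). Qed.

Definition block_pos i := i - block_start (block_of i).

Lemma block_pos_lt i : block_pos i < size (u (block_of i)).
Proof. by have := block_ofP i; rewrite /in_block /block_pos /=; lia. Qed.

Definition pres_of_trans : presentation Sigma B :=
  Pres (unary_proj (t_univ T)) (fun s => unary_proj (t_lab T s)) (length_lex (t_le T)).

Definition block_elem i := H (block_of i) (block_pos i).

Lemma size_block_elem i : size (block_elem i) = block_of i.
Proof. exact: ((H_out (block_of i)).1 _ (block_pos_lt i)).1. Qed.

Lemma pres_of_trans_presents :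
  presents pres_of_trans (fun i => nth x0 (u (block_of i)) (block_pos i)).
Proof.
exists block_elem; split.
  by move=> i; rewrite /= accepts_unary_proj; exact: ((H_out _).1 _ (block_pos_lt i)).2.
split.
  move=> x; rewrite /= accepts_unary_proj => Hx.
  case: ((H_out (size x)).2.1 x erefl Hx) => j Hj <-.
  have E : block_of (block_start (size x) + j) = size x.
    by apply: block_of_eq; rewrite /in_block /=; lia.
  by exists (block_start (size x) + j); rewrite /block_elem /block_pos E addKn.
split; last first.
  move=> i s; rewrite /= accepts_unary_proj (H_out _).2.2.2 ?block_pos_lt //.
  by rewrite (onth_nth x0) ?block_pos_lt //; split => [[->]|->].
move=> i j; rewrite /= accepts_length_lex !size_block_elem.
have := block_ofP i; have := block_ofP j; rewrite /in_block.
case: (ltngtP (block_of i) (block_of j)) => Hij.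
- by have := block_start_mono Hij; split => // _; lia.
- by have := block_start_mono Hij; split => // Hle; exfalso; lia.
rewrite /= /block_elem Hij (H_out _).2.2.1 ?block_pos_lt //; last by rewrite -Hij block_pos_lt.
by rewrite /block_pos Hij; split; lia.
Qed.

Lemma pres_of_trans_mono : length_monotonous pres_of_trans.
Proof. by move=> x y _ _ Hxy; rewrite /= accepts_length_lex Hxy. Qed.

Lemma pres_of_trans_corresponds : corresponds pres_of_trans T.
Proof.
split; first by move=> x; rewrite /= accepts_unary_proj.
split; first by move=> s x _; rewrite /= accepts_unary_proj.
by move=> x y _ _ Hs; rewrite /= accepts_length_lex Hs ltnn eqxx.
Qed.

End TransductionBlocks.

Lemma corresponds_same_pres (Sigma B : finType) (S S' : presentation Sigma B)
    (w w' : nat -> Sigma) (T : transduction Sigma B) :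
  length_monotonous S -> presents S w -> length_monotonous S' -> presents S' w' ->
  corresponds S T -> corresponds S' T -> same_pres S S'.
Proof.
move=> hM [h [hU [hS [hO _]]]] hM' [h' [hU' [hS' [hO' _]]]] [cU [cL cO]] [cU' [cL' cO']].
have uu x : accepts (p_univ S) x <-> accepts (p_univ S') x.
  exact: iff_trans (cU x) (iff_sym (cU' x)).
split; first exact: uu.
split=> [s x Hx|x y Hx Hy].
  exact: iff_trans (cL s x Hx) (iff_sym (cL' s x ((uu x).1 Hx))).
have Hx' := (uu x).1 Hx; have Hy' := (uu y).1 Hy.
case: (ltngtP (size x) (size y)) => Hs.
- by split => _; [apply: hM' | apply: hM].
- have := le_size hU hS hO hM Hx Hy; have := le_size hU' hS' hO' hM' Hx' Hy'.
  rewrite leqNgt Hs => nle' nle.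
  by split => /[dup] Hle; [move/nle | move/nle'].
- exact: iff_trans (cO x y Hx Hy Hs) (iff_sym (cO' x y Hx' Hy' Hs)).
Qed.

Lemma corresponds_same_trans (Sigma B : finType) (S : presentation Sigma B)
    (T T' : transduction Sigma B) :
  corresponds S T -> corresponds S T' -> same_trans T T'.
Proof.
move=> [cU [cL cO]] [cU' [cL' cO']].
split=> [x|]; first exact: iff_trans (iff_sym (cU x)) (cU' x).
split=> [s x Hx|x y Hx Hy Hs].
  by have Hx' := (cU x).2 Hx; exact: iff_trans (iff_sym (cL s x Hx')) (cL' s x Hx').
have Hx' := (cU x).2 Hx; have Hy' := (cU y).2 Hy.
exact: iff_trans (iff_sym (cO x y Hx' Hy' Hs)) (cO' x y Hx' Hy' Hs).
Qed.

Theorem mainTheorem2 (Sigma B : finType) :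
  (forall (S : presentation Sigma B) (w : nat -> Sigma),
      length_monotonous S -> presents S w ->
      exists T : transduction Sigma B, total_transduction T /\ corresponds S T) /\
  (forall (T : transduction Sigma B) (u : nat -> seq Sigma),
      total_transduction T -> (forall n, outputs T n (u n)) ->
      (forall N, exists n, N <= n /\ u n != [::]) ->
      exists (S : presentation Sigma B) (w : nat -> Sigma),
        length_monotonous S /\ presents S w /\ corresponds S T) /\
  (forall (S S' : presentation Sigma B) (w w' : nat -> Sigma)
          (T : transduction Sigma B),
      length_monotonous S -> presents S w ->
      length_monotonous S' -> presents S' w' ->
      total_transduction T -> corresponds S T -> corresponds S' T ->
      same_pres S S') /\
  (forall (S : presentation Sigma B) (w : nat -> Sigma)
          (T T' : transduction Sigma B),
      length_monotonous S -> presents S w ->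
      total_transduction T -> total_transduction T' ->
      corresponds S T -> corresponds S T' -> same_trans T T') /\
  (forall (S : presentation Sigma B) (w : nat -> Sigma)
          (T : transduction Sigma B) (u : nat -> seq Sigma),
      length_monotonous S -> presents S w ->
      total_transduction T -> corresponds S T ->
      (forall n, outputs T n (u n)) -> Pi_eq u w).
Proof.
split.
  move=> S w _ [h [hU [hS [hO hL]]]]; exists (trans_of_pres S).
  by split; [exact: trans_of_pres_total hU hS hO hL | exact: trans_of_pres_corresponds].
split.
  move=> T u _ Hout Hne.
  have [H HH] := functional_choice _ Hout.
  case: (Hne 0) => n [_]; case: (u n) => [|x0 _] // _.
  exists (pres_of_trans T); eexists.
  split; first exact: pres_of_trans_mono.
  by split; [exact: pres_of_trans_presents HH Hne x0 | exact: pres_of_trans_corresponds].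
split.
  by move=> S S' w w' T hM hS hM' hS' _; exact: corresponds_same_pres hM hS hM' hS'.
split; first by move=> S w T T' _ _ _ _; exact: corresponds_same_trans.
by move=> S w T u hM [h [hU [hS [hO hL]]]] _; move=> cT Hu; exact: (Pi_eq_levels hU hS hO hL hM cT Hu).
Qed.
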